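(* For $n\ge2$ and all $P,Q\in\Gamma_n$, $D_{J\Delta}(P\|Q)\le \frac23 D_{T\Delta}(P\|Q)$.
   Context: $\Gamma_n=\{P=(p_1,\dots,p_n): p_i>0,\ \sum p_i=1\}$. $\Delta(P\|Q)=\sum_{i=1}^n\frac{(p_i-q_i)^2}{p_i+q_i}$; $J(P\|Q)=\sum_{i=1}^n(p_i-q_i)\ln\frac{p_i}{q_i}$; $T(P\|Q)=\sum_{i=1}^n\frac{p_i+q_i}{2}\ln\frac{p_i+q_i}{2\sqrt{p_iq_i}}$. $D_{J\Delta}=\frac18J-\frac14\Delta$, $D_{T\Delta}=T-\frac14\Delta$. *)

From Stdlib Require Import Reals.
Open Scope R_scope.

Fixpoint fsum (n : nat) (f : nat -> R) : R :=
  match n with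
  | O => 0
  | S m => fsum m f + f m
  end.

Definition Gamma (n : nat) (P : nat -> R) : Prop :=
  (forall i, (i < n)%nat -> 0 < P i) /\ fsum n P = 1.

Definition Delta (n : nat) (P Q : nat -> R) : R :=
  fsum n (fun i => (P i - Q i) ^ 2 / (P i + Q i)).

Definition Jdiv (n : nat) (P Q : nat -> R) : R :=
  fsum n (fun i => (P i - Q i) * ln (P i / Q i)).

Definition Tdiv (n : nat) (P Q : nat -> R) : R :=
  fsum n (fun i => (P i + Q i) / 2 * ln ((P i + Q i) / (2 * sqrt (P i * Q i)))).

Definition D_JDelta (n : nat) (P Q : nat -> R) : R :=
  / 8 * Jdiv n P Q - / 4 * Delta n P Q.

Definition D_TDelta (n : nat) (P Q : nat -> R) : R :=
  Tdiv n P Q - / 4 * Delta n P Q.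

(** The inequality holds summand by summand.  With [s = p + q] and
    [u = (p - q)/s], the summand of [2/3 D_TDelta - D_JDelta] is [s/2 * defect u]
    where [defect u = -ln(1 - u^2)/3 + u^2/6 - u artanh(u)/2].  The function
    [defect] is even, vanishes together with its derivative at [0], and its
    second derivative is [u^4/(3(1 - u^2)^2) >= 0], so it is nonnegative on
    [(-1, 1)]. *)

From Pilot Require Import Defs.
From Stdlib Require Import Reals Lra.
From Coquelicot Require Import Coquelicot.
Open Scope R_scope.

Lemma le_of_is_derive_nonneg (f f' : R -> R) (a b : R) : a <= b ->
  (forall x, a <= x <= b -> is_derive f x (f' x)) ->
  (forall x, a <= x <= b -> 0 <= f' x) -> f a <= f b.
Proof.
  intros Hab Hd Hpos. destruct (Req_dec a b) as [<-|Hne]; [lra|].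
  destruct (MVT_cor2 f f' a b) as [c [Hfc Hc]]; [lra| |].
  - intros x Hx. apply is_derive_Reals, Hd, Hx.
  - assert (0 <= f' c) by (apply Hpos; lra). nra.
Qed.

Definition defect (u : R) : R :=
  - (ln (1 + u) + ln (1 - u)) / 3 + u ^ 2 / 6 - u * (ln (1 + u) - ln (1 - u)) / 4.

Definition defect_deriv (u : R) : R :=
  u / 3 + u / (6 * (1 - u ^ 2)) - (ln (1 + u) - ln (1 - u)) / 4.

Lemma is_derive_defect u : -1 < u < 1 -> is_derive defect u (defect_deriv u).
Proof.
  intros Hu. unfold defect, defect_deriv. assert (1 - u ^ 2 <> 0) by nra.
  auto_derive.
  - repeat split; lra.
  - unfold Rminus. field. repeat split; lra.
Qed.

Lemma is_derive_defect_deriv u : -1 < u < 1 ->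
  is_derive defect_deriv u (u ^ 4 / (3 * (1 - u ^ 2) ^ 2)).
Proof.
  intros Hu. unfold defect_deriv. assert (1 - u ^ 2 <> 0) by nra.
  auto_derive.
  - repeat split; lra.
  - unfold Rminus. field. repeat split; lra.
Qed.

Lemma defect_deriv_ge0 u : 0 <= u < 1 -> 0 <= defect_deriv u.
Proof.
  intros Hu. replace 0 with (defect_deriv 0).
  - apply (le_of_is_derive_nonneg defect_deriv
             (fun x => x ^ 4 / (3 * (1 - x ^ 2) ^ 2)) 0 u); [lra| |].
    + intros x Hx. apply is_derive_defect_deriv. lra.
    + intros x Hx. assert (0 < 1 - x ^ 2) by nra.
      apply Rmult_le_pos; [nra|]. apply Rlt_le, Rinv_0_lt_compat. nra.
  - unfold defect_deriv. rewrite Rplus_0_r, Rminus_0_r, ln_1. field.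
Qed.

Lemma defect_even u : defect (- u) = defect u.
Proof.
  unfold defect. replace (1 + - u) with (1 - u) by ring.
  replace (1 - - u) with (1 + u) by ring. field.
Qed.

Lemma defect_ge0 u : -1 < u < 1 -> 0 <= defect u.
Proof.
  assert (Hpos : forall v, 0 <= v < 1 -> 0 <= defect v).
  { intros v Hv. replace 0 with (defect 0).
    - apply (le_of_is_derive_nonneg defect defect_deriv 0 v); [lra| |].
      + intros x Hx. apply is_derive_defect. lra.
      + intros x Hx. apply defect_deriv_ge0. lra.
    - unfold defect. rewrite Rplus_0_r, Rminus_0_r, ln_1. field. }
  intros Hu. destruct (Rle_dec 0 u).
  - apply Hpos. lra.
  - rewrite <- defect_even. apply Hpos. lra.
Qed.

Lemma fsum_le n f g : (forall i, (i < n)%nat -> f i <= g i) -> fsum n f <= fsum n g.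
Proof.
  induction n as [|n IH]; intros Hfg; simpl; [lra|].
  apply Rplus_le_compat; [apply IH; auto | apply Hfg; auto].
Qed.

Lemma fsum_scal n c f : fsum n (fun i => c * f i) = c * fsum n f.
Proof. induction n as [|n IH]; simpl; [ring | rewrite IH; ring]. Qed.

Lemma fsum_minus n f g : fsum n (fun i => f i - g i) = fsum n f - fsum n g.
Proof. induction n as [|n IH]; simpl; [ring | rewrite IH; ring]. Qed.

Lemma JDelta_summand_le_TDelta_summand p q : 0 < p -> 0 < q ->
  / 8 * ((p - q) * ln (p / q)) - / 4 * ((p - q) ^ 2 / (p + q)) <=
  2 / 3 * ((p + q) / 2 * ln ((p + q) / (2 * sqrt (p * q))) - / 4 * ((p - q) ^ 2 / (p + q))).
Proof.
  intros Hp Hq. set (s := p + q). set (u := (p - q) / s).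
  assert (Hs : 0 < s) by (unfold s; lra).
  assert (Hplus : 1 + u = 2 * p / s) by (unfold u, s; field; lra).
  assert (Hminus : 1 - u = 2 * q / s) by (unfold u, s; field; lra).
  assert (Hu : -1 < u < 1).
  { assert (0 < 2 * p / s) by (apply Rdiv_lt_0_compat; lra).
    assert (0 < 2 * q / s) by (apply Rdiv_lt_0_compat; lra). lra. }
  assert (HJ : ln (p / q) = ln (1 + u) - ln (1 - u)).
  { rewrite <- ln_div by lra. f_equal. rewrite Hplus, Hminus. field. lra. }
  assert (HT : ln (s / (2 * sqrt (p * q))) = - (ln (1 + u) + ln (1 - u)) / 2).
  { assert (Hsq : 0 < sqrt (p * q)) by (apply sqrt_lt_R0; nra).
    set (r := 2 * sqrt (p * q) / s).
    assert (Hr : 0 < r) by (apply Rdiv_lt_0_compat; lra).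
    assert (Hr2 : (1 + u) * (1 - u) = r ^ 2).
    { unfold r. rewrite Hplus, Hminus.
      replace ((2 * sqrt (p * q) / s) ^ 2)
        with (4 * (sqrt (p * q) * sqrt (p * q)) / (s * s)) by (field; lra).
      rewrite sqrt_sqrt by nra. field. lra. }
    replace (s / (2 * sqrt (p * q))) with (/ r) by (unfold r; field; lra).
    rewrite <- ln_mult, Hr2, ln_Rinv, ln_pow by lra. simpl INR. lra. }
  assert (Hd : p - q = s * u) by (unfold u; field; lra).
  rewrite HJ, HT, Hd. replace ((s * u) ^ 2 / s) with (s * u ^ 2) by (field; lra).
  assert (Hdef : 0 <= s / 2 * defect u)
    by (apply Rmult_le_pos; [lra | apply defect_ge0, Hu]).
  unfold defect in Hdef. lra.
Qed.

Theorem proposition5p5 (n : nat) (P Q : nat -> R) :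
  (2 <= n)%nat -> Gamma n P -> Gamma n Q ->
  D_JDelta n P Q <= 2 / 3 * D_TDelta n P Q.
Proof.
  intros _ [HP _] [HQ _].
  unfold D_JDelta, D_TDelta, Jdiv, Tdiv, Defs.Delta.
  rewrite <- !fsum_scal, <- !fsum_minus, <- fsum_scal.
  apply fsum_le. intros i Hi. apply JDelta_summand_le_TDelta_summand; auto.
Qed.
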